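(* Let $m \geq 3$ be an integer and let $\alpha$ be a real number. Then there are only finitely many pairs $(x,y)$ of positive integers with $\gcd(x,y)=1$ such that $$\sin\bigl(m \cdot \arctan(y/x)\bigr) = \alpha .$$
   Context: Here $\arctan$ denotes the principal branch, so that for positive integers $x,y$ the angle $\theta = \arctan(y/x)$ lies in $(0,\pi/2)$ and is the acute angle of the right triangle with legs $x$ (adjacent) and $y$ (opposite). A pair $(x,y)$ of positive integers is called primitive if $\gcd(x,y)=1$. *)

From Stdlib Require Import Reals Arith List.

(* Write θ = atan (y/x) and N = x^2 + y^2.  By de Moivre, sin (m θ) N^(m/2) is the
   imaginary part B of the Gaussian integer (x + i y)^m, so two solutions (x, y) and
   (x0, y0) of sin (m θ) = α satisfy B^2 N0^m = B0^2 N^m.  Modulo the odd part M of N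
   (with N <= 2 M) one has B ≡ (2x)^(m-1) y, which is prime to M when gcd (x, y) = 1.
   Hence M^m divides N0^m, so N <= 2 N0: all primitive solutions lie in a bounded box. *)
From Stdlib Require Import Reals Arith List.
From Stdlib Require Import ZArith Znumtheory Zpow_facts Lia Lra Classical.

Local Open Scope Z_scope.

Lemma rel_prime_of_nat_gcd (x y : nat) :
  (0 < x)%nat -> Nat.gcd x y = 1%nat -> rel_prime (Z.of_nat x) (Z.of_nat y).
Proof.
  intros Hx Hg. destruct (Nat.gcd_bezout_pos x y Hx) as [a [b Hab]].
  apply bezout_rel_prime, (Bezout_intro _ _ _ (Z.of_nat a) (- Z.of_nat b)).
  rewrite Hg in Hab. lia.
Qed.

(* Real and imaginary parts of the Gaussian integer (x + i y)^k. *)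
Fixpoint gauss_pow (x y : Z) (k : nat) : Z * Z :=
  match k with
  | O => (1, 0)
  | S k => let (a, b) := gauss_pow x y k in (x * a - y * b, y * a + x * b)
  end.

Definition gauss_im (x y : Z) (k : nat) : Z := snd (gauss_pow x y k).

Lemma gauss_imSS (x y : Z) (k : nat) :
  gauss_im x y (S (S k)) = 2 * x * gauss_im x y (S k) - (x * x + y * y) * gauss_im x y k.
Proof.
  unfold gauss_im; cbn [gauss_pow]. destruct (gauss_pow x y k) as [a b]. cbn [snd]. ring.
Qed.

Lemma gauss_im_congr (x y M : Z) (k : nat) :
  (M | x * x + y * y) -> (M | gauss_im x y (S k) - (2 * x) ^ Z.of_nat k * y).
Proof.
  intros [n Hn]. induction k as [k IH] using (well_founded_induction lt_wf).
  destruct k as [|k].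
  - exists 0. unfold gauss_im; cbn [gauss_pow snd Z.of_nat]. rewrite Z.pow_0_r. ring.
  - destruct (IH k ltac:(lia)) as [q Hq].
    exists (2 * x * q - n * gauss_im x y k).
    rewrite gauss_imSS, Nat2Z.inj_succ, Z.pow_succ_r by lia.
    replace (gauss_im x y (S k)) with ((2 * x) ^ Z.of_nat k * y + q * M) by lia.
    rewrite Hn. ring.
Qed.

Lemma rel_prime_dvd_sumsq (x y M : Z) :
  rel_prime x y -> (M | x * x + y * y) -> rel_prime M x.
Proof.
  intros Hxy HM. apply rel_prime_sym.
  assert (Hxyy : rel_prime x (y * y)) by (apply rel_prime_mult; auto).
  constructor; try apply Z.divide_1_l; try apply Z.divide_refl.
  intros d Hdx HdM. destruct Hxyy as [_ _ Hg]. apply Hg; [exact Hdx|].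
  replace (y * y) with (x * x + y * y - x * x) by ring.
  apply Z.divide_sub_r; [exact (Z.divide_trans _ _ _ HdM HM)|].
  apply Z.divide_mul_l, Hdx.
Qed.

Lemma rel_prime_gauss_im (x y M : Z) (k : nat) :
  rel_prime x y -> (M | x * x + y * y) -> rel_prime M 2 ->
  rel_prime M (gauss_im x y (S k)).
Proof.
  intros Hxy HM HM2.
  assert (HMx : rel_prime M x) by exact (rel_prime_dvd_sumsq x y M Hxy HM).
  assert (HMy : rel_prime M y).
  { apply (rel_prime_dvd_sumsq y x); [now apply rel_prime_sym|].
    now rewrite Z.add_comm. }
  assert (HMp : rel_prime M ((2 * x) ^ Z.of_nat k * y)).
  { apply rel_prime_mult; [|exact HMy].
    apply rel_prime_Zpower_r; [lia|]. now apply rel_prime_mult. }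
  destruct (gauss_im_congr x y M k HM) as [q Hq].
  replace (gauss_im x y (S k)) with ((2 * x) ^ Z.of_nat k * y + q * M) by lia.
  apply Zgcd_1_rel_prime. rewrite Z.gcd_add_mult_diag_r. now apply Zgcd_1_rel_prime.
Qed.

(* The odd part of a sum of two coprime squares: 4 never divides it. *)
Lemma sumsq_odd_part (x y : Z) :
  rel_prime x y ->
  exists M, 0 < M /\ (M | x * x + y * y) /\ rel_prime M 2 /\ x * x + y * y <= 2 * M.
Proof.
  intros Hxy.
  assert (Hodd : forall c, rel_prime (2 * c + 1) 2).
  { intros c. apply bezout_rel_prime, (Bezout_intro _ _ _ 1 (- c)). ring. }
  destruct (Z.Even_or_Odd x) as [[a ->]|[a ->]];
    destruct (Z.Even_or_Odd y) as [[b ->]|[b ->]].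
  all: pose proof (Z.square_nonneg a); pose proof (Z.square_nonneg b).
  all: assert (0 <= a * a + a) by (destruct (Z.le_gt_cases 0 a); nia).
  all: assert (0 <= b * b + b) by (destruct (Z.le_gt_cases 0 b); nia).
  - exfalso. destruct Hxy as [_ _ Hg].
    assert (H21 : (2 | 1)) by (apply Hg; [exists a | exists b]; ring).
    apply Z.divide_pos_le in H21; lia.
  - exists (2 * (2 * a * a + 2 * b * b + 2 * b) + 1).
    split; [|split; [|split]]; [nia | exists 1; ring | apply Hodd | nia].
  - exists (2 * (2 * a * a + 2 * a + 2 * b * b) + 1).
    split; [|split; [|split]]; [nia | exists 1; ring | apply Hodd | nia].
  - exists (2 * (a * a + a + b * b + b) + 1).
    split; [|split; [|split]]; [nia | exists 2; ring | apply Hodd | nia].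
Qed.

Lemma sumsq_le_of_dvd (x y c : Z) (k : nat) :
  rel_prime x y -> 0 < c ->
  ((x * x + y * y) ^ Z.of_nat (S k) | gauss_im x y (S k) * gauss_im x y (S k) * c ^ Z.of_nat (S k)) ->
  x * x + y * y <= 2 * c.
Proof.
  intros Hxy Hc Hdvd.
  destruct (sumsq_odd_part x y Hxy) as [M [HM0 [HM [HM2 HNM]]]].
  assert (HMk : (M ^ Z.of_nat (S k) | gauss_im x y (S k) * gauss_im x y (S k) * c ^ Z.of_nat (S k))).
  { apply (Z.divide_trans _ ((x * x + y * y) ^ Z.of_nat (S k))); [|exact Hdvd].
    destruct HM as [n ->]. exists (n ^ Z.of_nat (S k)). apply Z.pow_mul_l. }
  apply Gauss in HMk.
  - apply Z.divide_pos_le in HMk; [|apply Z.pow_pos_nonneg; lia].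
    apply Z.pow_le_mono_l_iff in HMk; lia.
  - apply rel_prime_sym, rel_prime_Zpower_r; [lia|].
    apply rel_prime_sym, rel_prime_mult; now apply rel_prime_gauss_im.
Qed.

Local Open Scope R_scope.

Lemma polar_atan (x y : R) :
  0 < x ->
  cos (atan (y / x)) * sqrt (x * x + y * y) = x /\
  sin (atan (y / x)) * sqrt (x * x + y * y) = y.
Proof.
  intros Hx.
  assert (Hs : sqrt (1 + (y / x)²) * x = sqrt (x * x + y * y)).
  { rewrite <- (sqrt_square x) at 2 by lra.
    rewrite <- sqrt_mult_alt by (pose proof (Rle_0_sqr (y / x)); lra).
    f_equal. unfold Rsqr. field. lra. }
  assert (Hpos : 0 < sqrt (1 + (y / x)²)).
  { apply sqrt_lt_R0. pose proof (Rle_0_sqr (y / x)); lra. }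
  rewrite <- Hs, cos_atan, sin_atan. split; field; lra.
Qed.

Lemma polar_gauss_pow (x y : Z) (k : nat) :
  0 < IZR x ->
  cos (INR k * atan (IZR y / IZR x)) * sqrt (IZR (x * x + y * y)) ^ k
    = IZR (fst (gauss_pow x y k)) /\
  sin (INR k * atan (IZR y / IZR x)) * sqrt (IZR (x * x + y * y)) ^ k
    = IZR (snd (gauss_pow x y k)).
Proof.
  intros Hx.
  destruct (polar_atan (IZR x) (IZR y) Hx) as [Hc Hs].
  rewrite <- !mult_IZR, <- plus_IZR in Hc, Hs.
  set (t := atan (IZR y / IZR x)) in *. set (r := sqrt (IZR (x * x + y * y))) in *.
  induction k as [|k [IH1 IH2]].
  - simpl. rewrite Rmult_0_l, cos_0, sin_0. split; ring.
  - cbn [gauss_pow]. destruct (gauss_pow x y k) as [a b]. cbn [fst snd] in *.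
    rewrite S_INR, Rmult_plus_distr_r, Rmult_1_l, cos_plus, sin_plus. simpl pow.
    rewrite minus_IZR, plus_IZR, !mult_IZR, <- IH1, <- IH2, <- Hc, <- Hs.
    split; ring.
Qed.

Lemma gauss_im_cross_eq (x y x0 y0 : Z) (k : nat) :
  (0 < x)%Z -> (0 < x0)%Z ->
  sin (INR k * atan (IZR y / IZR x)) = sin (INR k * atan (IZR y0 / IZR x0)) ->
  (gauss_im x y k * gauss_im x y k * (x0 * x0 + y0 * y0) ^ Z.of_nat k
   = gauss_im x0 y0 k * gauss_im x0 y0 k * (x * x + y * y) ^ Z.of_nat k)%Z.
Proof.
  intros Hx Hx0 Hsin.
  destruct (polar_gauss_pow x y k (IZR_lt _ _ Hx)) as [_ HB].
  destruct (polar_gauss_pow x0 y0 k (IZR_lt _ _ Hx0)) as [_ HB0].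
  assert (Hsq : forall z, (0 <= z)%Z -> (sqrt (IZR z) ^ k) * (sqrt (IZR z) ^ k) = IZR z ^ k).
  { intros z Hz. rewrite <- Rpow_mult_distr, sqrt_sqrt; [reflexivity | now apply IZR_le]. }
  apply eq_IZR. rewrite !mult_IZR, <- !pow_IZR.
  rewrite <- (Hsq (x * x + y * y)%Z), <- (Hsq (x0 * x0 + y0 * y0)%Z) by nia.
  unfold gauss_im. rewrite <- HB, <- HB0, Hsin. ring.
Qed.

Lemma sumsq_le_of_sin_mul_atan_eq (x y x0 y0 : Z) (m : nat) :
  (0 < m)%nat -> (0 < x)%Z -> (0 < x0)%Z -> rel_prime x y ->
  sin (INR m * atan (IZR y / IZR x)) = sin (INR m * atan (IZR y0 / IZR x0)) ->
  (x * x + y * y <= 2 * (x0 * x0 + y0 * y0))%Z.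
Proof.
  intros Hm Hx Hx0 Hxy Hsin. destruct m as [|k]; [lia|].
  apply (sumsq_le_of_dvd x y _ k Hxy); [nia|].
  rewrite (gauss_im_cross_eq x y x0 y0 (S k) Hx Hx0 Hsin).
  apply Z.divide_factor_r.
Qed.

Theorem mainTheorem1 (m : nat) (alpha : R) (Hm : (3 <= m)%nat) :
  exists l : list (nat * nat),
    forall x y : nat,
      (0 < x)%nat -> (0 < y)%nat -> Nat.gcd x y = 1%nat ->
      sin (INR m * atan (INR y / INR x)) = alpha ->
      In (x, y) l.
Proof.
  destruct (classic (exists x0 y0 : nat,
    (0 < x0)%nat /\ sin (INR m * atan (INR y0 / INR x0)) = alpha))
    as [[x0 [y0 [Hx0 Hsin0]]] | Hnone].
  - set (K := Z.to_nat (2 * (Z.of_nat x0 * Z.of_nat x0 + Z.of_nat y0 * Z.of_nat y0))).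
    exists (list_prod (seq 0 (S K)) (seq 0 (S K))).
    intros x y Hx _ Hg Hsin.
    rewrite (INR_IZR_INZ x), (INR_IZR_INZ y), <- Hsin0 in Hsin.
    rewrite (INR_IZR_INZ x0), (INR_IZR_INZ y0) in Hsin.
    pose proof (sumsq_le_of_sin_mul_atan_eq (Z.of_nat x) (Z.of_nat y)
      (Z.of_nat x0) (Z.of_nat y0) m ltac:(lia) ltac:(lia) ltac:(lia)
      (rel_prime_of_nat_gcd x y Hx Hg) Hsin) as Hbound.
    assert (Z.of_nat x <= Z.of_nat x * Z.of_nat x)%Z by nia.
    assert (Z.of_nat y <= Z.of_nat y * Z.of_nat y)%Z by nia.
    apply in_prod; apply in_seq; unfold K; lia.
  - exists nil. intros x y Hx _ _ Hsin. apply Hnone. now exists x, y.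
Qed.
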